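(* Let $\alpha\in\mathbb{Q}(i)\setminus\mathbb{R}$ with $|\alpha|>1$, with minimal primitive polynomial $P_\alpha(X)=a_2X^2+a_1X+a_0$ ($a_0,a_1,a_2\in\mathbb{Z}$ coprime, $a_2>0$, $P_\alpha(\alpha)=0$), and $\mathcal{D}=\{0,\ldots,|a_0|-1\}$; write $\alpha=\frac{num(\alpha)}{den(\alpha)}$ with $num(\alpha),den(\alpha)\in\mathbb{Z}[i]$ having no common Gaussian prime divisor. Then for every $k\in\mathbb{Z}$ and every sequence $(d_j)_{j\le k}$ in $\mathcal{D}$, the series $\sum_{j\le k}d_j\alpha^j$ converges in $\mathbb{C}$ and in $K_p$ for every Gaussian prime $p$ dividing $den(\alpha)$; hence it is the $\alpha$-expansion of some ambinumber $(x,y)\in\mathbb{C}\times K_{den(\alpha)}$.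
   Context: For a Gaussian prime $p$, $\nu_p$ is the exponent of $p$ in the Gaussian prime factorization of a nonzero element of $\mathbb{Q}(i)$ ($\nu_p(0)=\infty$), $|x|_p=N(p)^{-\nu_p(x)}$ with $N(p)$ the norm of $p$, and $K_p$ is the completion of $\mathbb{Q}(i)$ for $|\cdot|_p$. $K_{den(\alpha)}=\prod_{p\mid den(\alpha)}K_p$ (product over Gaussian primes, up to associates). For $(x,y)\in\mathbb{C}\times K_{den(\alpha)}$ with $y=(y_p)_p$, a series $\sum_{j\le k}d_j\alpha^j$ ($d_j\in\mathcal{D}$, $d_k\ne0$ whenever $k\ge1$) is an $\alpha$-expansion of $(x,y)$ if it converges to $x$ in $\mathbb{C}$ and to $y_p$ in $K_p$ for each $p\mid den(\alpha)$. *)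

(* C is modelled as R[i] (mathcomp-real-closed complex)
   over an arbitrary R : realType; Q(i) is the set of elements of R[i]
   with rational real and imaginary parts. *)
From HB Require Import structures.
From mathcomp Require Import all_boot all_order all_algebra.
From mathcomp Require Import reals complex.
From Stdlib Require Import ClassicalEpsilon.

Set Implicit Arguments.
Unset Strict Implicit.
Unset Printing Implicit Defensive.

Import Order.TTheory GRing.Theory Num.Theory.
Local Open Scope ring_scope.

Definition gaussRat {R : realType} (x : R[i]) : Prop :=
  exists a b : rat, x = Complex (ratr a) (ratr b).

Definition gaussInt {R : realType} (x : R[i]) : Prop :=
  exists a b : int, x = Complex (a%:~R) (b%:~R).

Definition gdvd {R : realType} (a b : R[i]) : Prop :=
  exists c, gaussInt c /\ b = a * c.

Definition gunit {R : realType} (u : R[i]) : Prop :=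
  gaussInt u /\ exists v, gaussInt v /\ u * v = 1.

Definition gprime {R : realType} (p : R[i]) : Prop :=
  [/\ gaussInt p, p <> 0, ~ gunit p &
      forall a b, gaussInt a -> gaussInt b -> p = a * b -> gunit a \/ gunit b].

Definition is_pval {R : realType} (p x : R[i]) (n : int) : Prop :=
  exists a b, gaussInt a /\ gaussInt b /\ b <> 0 /\ ~ gdvd p a /\
                ~ gdvd p b /\ x = p ^ n * (a / b).

(* nu_p(x) for nonzero x in Q(i) (the value at 0 is irrelevant since |0|_p = 0). *)
Definition pval {R : realType} (p x : R[i]) : int :=
  epsilon (inhabits 0%R) (is_pval p x).

Definition gnorm {R : realType} (p : R[i]) : R := complex.Re p ^+ 2 + complex.Im p ^+ 2.

Definition absp {R : realType} (p x : R[i]) : R :=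
  if x == 0 then 0 else gnorm p ^ (- pval p x).

(* Partial sums of sum_{j <= k} d_j alpha^j : the n-th one is
   sum_{k-n < j <= k} d_j alpha^j. *)
Definition alpha_psum {R : realType} (alpha : R[i]) (k : int) (d : int -> nat)
    (n : nat) : R[i] :=
  \sum_(i < n) (d (k - i%:Z))%:R * alpha ^ (k - i%:Z).

Definition cvgC {R : realType} (u : nat -> R[i]) : Prop :=
  exists l : R[i], forall e : R, 0 < e ->
    exists N, forall n, (N <= n)%N -> `|u n - l| < e%:C%C.

(* Convergence in K_p of a sequence of Q(i): since K_p is the completion of
   Q(i) for |.|_p, this means the sequence is |.|_p-Cauchy. *)
Definition cvgKp {R : realType} (p : R[i]) (u : nat -> R[i]) : Prop :=
  forall e : R, 0 < e -> exists N, forall m n, (N <= m)%N -> (N <= n)%N ->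
    absp p (u m - u n) < e.

From HB Require Import structures.
From mathcomp Require Import all_boot all_order all_algebra.
From mathcomp Require Import reals complex classical_sets.
From mathcomp Require Import ring lra zify.
From Stdlib Require Import Classical ClassicalEpsilon.

Set Implicit Arguments.
Unset Strict Implicit.
Unset Printing Implicit Defensive.

Import Order.TTheory GRing.Theory Num.Theory.
Local Open Scope ring_scope.

Local Notation Re := complex.Re.
Local Notation Im := complex.Im.

(* Complex side: the terms are bounded by D |alpha|^k |alpha|^-i with
   |alpha| > 1, so the real and imaginary parts form absolutely convergent
   real series; such a series sum u converges because the partial sums of
   u + |u| and of |u| are nondecreasing and bounded.
   p-adic side: if p divides den then, num and den being coprime, p does not
   divide num, so alpha^-1 = den / num lies in p Z[i]_(p).  Hence d_j alpha^j
   lies in p^(-j) Z[i]_(p) for j <= 0, the terms tend to 0 p-adically, and the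
   ultrametric inequality makes the partial sums Cauchy.  That membership in
   p^m Z[i]_(p) forces nu_p >= m is Euclid's lemma in the Euclidean ring Z[i]. *)

Section RealSeries.
Variable R : realType.
Implicit Types (u v : nat -> R) (a b B : R).

Definition cvgR u a :=
  forall e, 0 < e -> exists N, forall n, (N <= n)%N -> `|u n - a| < e.

Lemma eq_cvgR u v a : u =1 v -> cvgR u a -> cvgR v a.
Proof. by move=> uv ua e /ua[N uN]; exists N => n /uN; rewrite uv. Qed.

Lemma nondecreasing_bounded_cvgR u B :
  (forall n, u n <= u n.+1) -> (forall n, u n <= B) -> exists a, cvgR u a.
Proof.
move=> u_incr u_le; have u_mono := homo_leq le_refl le_trans u_incr.
pose E := [set x : R | exists n, x = u n]%classic.
have supE : has_sup E by split; [exists (u 0%N), 0%N | exists B => _ [n ->]].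
exists (sup E) => e e_gt0.
have [_ [N ->] uN_gt] := sup_adherent e_gt0 supE.
exists N => n le_Nn.
have un_le : u n <= sup E by apply: sup_upper_bound => //; exists n.
have := u_mono _ _ le_Nn; rewrite ler0_norm ?subr_le0 //; lra.
Qed.

Lemma cvgRB u v a b :
  cvgR u a -> cvgR v b -> cvgR (fun n => u n - v n) (a - b).
Proof.
move=> ua vb e e_gt0; have e2_gt0 : 0 < e / 2 by rewrite divr_gt0.
have [N1 uN1] := ua _ e2_gt0; have [N2 vN2] := vb _ e2_gt0.
exists (maxn N1 N2) => n; rewrite geq_max => /andP[/uN1 lt1 /vN2 lt2].
have -> : u n - v n - (a - b) = (u n - a) - (v n - b) by ring.
have := ler_normB (u n - a) (v n - b); lra.
Qed.

Lemma abs_bounded_series_cvgR u B :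
  (forall n, \sum_(i < n) `|u i| <= B) ->
  exists a, cvgR (fun n => \sum_(i < n) u i) a.
Proof.
move=> sum_le.
have sum_abs_incr n : \sum_(i < n) `|u i| <= \sum_(i < n.+1) `|u i|.
  by rewrite big_ord_recr lerDl.
have [b sum_abs_b] := nondecreasing_bounded_cvgR sum_abs_incr sum_le.
have [a sum_shift_a] :
    exists a, cvgR (fun n => \sum_(i < n) (u i + `|u i|)) a.
  apply: (@nondecreasing_bounded_cvgR _ (B + B)) => n.
    by rewrite big_ord_recr lerDl /= -lerBlDr sub0r lerNnormlW.
  rewrite big_split lerD ?sum_le //; apply: le_trans (sum_le n).
  by apply: ler_sum => i _; apply: ler_norm.
exists (a - b); apply: eq_cvgR (cvgRB sum_shift_a sum_abs_b) => n.
by rewrite big_split addrK.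
Qed.

End RealSeries.

Section ComplexSeries.
Variable R : realType.
Implicit Types (z : R[i]) (t : nat -> R[i]).
Local Open Scope complex_scope.

Lemma normr_ge_Re z : (`|Re z|)%:C <= `|z|.
Proof. by rewrite normc_def lecR -sqrtr_sqr; apply: ler_wsqrtr; rewrite lerDl sqr_ge0. Qed.

Lemma normr_ge_Im z : (`|Im z|)%:C <= `|z|.
Proof. by rewrite normc_def lecR -sqrtr_sqr; apply: ler_wsqrtr; rewrite lerDr sqr_ge0. Qed.

Lemma normr_le_ReIm z : `|z| <= (`|Re z| + `|Im z|)%:C.
Proof.
rewrite normc_def lecR -[X in _ <= X]ger0_norm ?addr_ge0 // -sqrtr_sqr.
apply: ler_wsqrtr; rewrite sqrrD !real_normK ?num_real // mulr2n.
have := mulr_ge0 (normr_ge0 (Re z)) (normr_ge0 (Im z)); lra.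
Qed.

Lemma cvgC_Re_Im t a b :
  cvgR (fun n => Re (t n)) a -> cvgR (fun n => Im (t n)) b -> cvgC t.
Proof.
move=> Re_a Im_b; exists (a +i* b) => e e_gt0.
have e2_gt0 : 0 < e / 2 by rewrite divr_gt0.
have [N1 ReN1] := Re_a _ e2_gt0; have [N2 ImN2] := Im_b _ e2_gt0.
exists (maxn N1 N2) => n; rewrite geq_max => /andP[/ReN1 lt1 /ImN2 lt2].
by apply: le_lt_trans (normr_le_ReIm _) _; rewrite ltcR !raddfB /=; lra.
Qed.

Lemma geometric_bounded_series_cvgC t (M q : R) :
  0 <= q < 1 -> (forall i, `|t i| <= (M * q ^+ i)%:C) ->
  cvgC (fun n => \sum_(i < n) t i).
Proof.
move=> /andP[q_ge0 q_lt1] t_le.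
have M_ge0 : 0 <= M.
  by have := le_trans (normr_ge0 _) (t_le 0%N); rewrite expr0 mulr1 ler0c.
have sum_le (f : R[i] -> R) : (forall z, (`|f z|)%:C <= `|z|) ->
    forall n, \sum_(i < n) `|f (t i)| <= M / (1 - q).
  move=> f_le n; apply: (@le_trans _ _ (\sum_(i < n) M * q ^+ i)).
    by apply: ler_sum => i _; rewrite -lecR; apply: le_trans (f_le _) (t_le i).
  have geom : 1 - q ^+ n = (1 - q) * \sum_(i < n) q ^+ i.
    rewrite -{1}(expr1n R n) subrXX; congr (_ * _).
    by apply: eq_bigr => i _; rewrite expr1n mul1r.
  rewrite -mulr_sumr ler_wpM2l // -[(1 - q)^-1]mul1r ler_pdivlMr ?subr_gt0 //.
  by rewrite mulrC -geom gerBl exprn_ge0.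
have [a Re_a] := @abs_bounded_series_cvgR _ (fun i => Re (t i)) _ (sum_le _ normr_ge_Re).
have [b Im_b] := @abs_bounded_series_cvgR _ (fun i => Im (t i)) _ (sum_le _ normr_ge_Im).
by apply: (@cvgC_Re_Im _ a b); [apply: eq_cvgR Re_a | apply: eq_cvgR Im_b];
  move=> n; rewrite raddf_sum.
Qed.

Lemma cvgC_alpha_psum (alpha : R[i]) (k : int) (d : int -> nat) (D : nat) :
  1 < `|alpha| -> (forall j, j <= k -> (d j < D)%N) ->
  cvgC (alpha_psum alpha k d).
Proof.
move=> alpha_gt1 d_lt.
have alpha_neq0 : alpha != 0 by rewrite -normr_gt0 (lt_trans ltr01 alpha_gt1).
pose r := Re `|alpha|; pose s := Re `|alpha ^ k|.
have rE : r%:C = `|alpha| by rewrite RRe_real ?normr_real.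
have sE : s%:C = `|alpha ^ k| by rewrite RRe_real ?normr_real.
have r_gt0 : 0 < r by rewrite -ltcR rE (lt_trans ltr01 alpha_gt1).
have r_gt1 : 1 < r by rewrite -ltcR rE.
apply: (@geometric_bounded_series_cvgC
  (fun i => (d (k - i%:Z))%:R * alpha ^ (k - i%:Z)) (D%:R * s) r^-1).
  by rewrite invr_ge0 ltW //= invf_lt1.
move=> i; apply: (@le_trans _ _ ((D%:R)%:C * s%:C * (r%:C)^-1 ^+ i)); last first.
  by rewrite !rmorphM rmorphXn fmorphV.
rewrite rmorph_nat sE rE normrM normr_nat (expfzDr _ _ alpha_neq0) -exprnN.
rewrite normrM normfV normrX exprVn mulrA ler_wpM2r ?invr_ge0 ?exprn_ge0 //.
by rewrite ler_wpM2r // ler_nat ltnW // d_lt // gerBl.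
Qed.

End ComplexSeries.

Section GaussianIntegers.
Variable R : realType.
Implicit Types a b c e g p q x y : R[i].

Lemma gaussInt_int (n : int) : gaussInt (n%:~R : R[i]).
Proof. by exists n, 0; rewrite -[LHS](rmorph_int (real_complex R)) /= mulr0z. Qed.

Lemma gaussInt_nat (n : nat) : gaussInt (n%:R : R[i]).
Proof. exact: (gaussInt_int n). Qed.

Lemma gaussInt0 : gaussInt (0 : R[i]). Proof. exact: (gaussInt_int 0). Qed.

Lemma gaussInt1 : gaussInt (1 : R[i]). Proof. exact: (gaussInt_int 1). Qed.

Lemma gaussIntD x y : gaussInt x -> gaussInt y -> gaussInt (x + y).
Proof. by move=> [a [b ->]] [c [d ->]]; exists (a + c), (b + d); rewrite /= !rmorphD. Qed.

Lemma gaussIntN x : gaussInt x -> gaussInt (- x).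
Proof. by move=> [a [b ->]]; exists (- a), (- b); rewrite /= !rmorphN. Qed.

Lemma gaussIntB x y : gaussInt x -> gaussInt y -> gaussInt (x - y).
Proof. by move=> gx /gaussIntN; apply: gaussIntD. Qed.

Lemma gaussIntM x y : gaussInt x -> gaussInt y -> gaussInt (x * y).
Proof.
move=> [a [b ->]] [c [d ->]]; exists (a * c - b * d), (a * d + b * c).
by rewrite /= !rmorphD !rmorphN !rmorphM.
Qed.

Lemma gaussIntX x n : gaussInt x -> gaussInt (x ^+ n).
Proof.
move=> gx; elim: n => [|n IH]; first by rewrite expr0; apply: gaussInt1.
by rewrite exprS; apply: gaussIntM.
Qed.

Lemma gnormE x : (gnorm x)%:C%C = `|x| ^+ 2.
Proof. exact: add_Re2_Im2. Qed.

Lemma gnormM x y : gnorm (x * y) = gnorm x * gnorm y.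
Proof. by apply: complexI; rewrite rmorphM /= !gnormE normrM exprMn. Qed.

Lemma gnorm_ge0 x : 0 <= gnorm x.
Proof. by rewrite addr_ge0 ?sqr_ge0. Qed.

Lemma gnorm_eq0 x : (gnorm x == 0) = (x == 0).
Proof. by rewrite -(inj_eq (@complexI R)) gnormE rmorph0 expf_eq0 normr_eq0. Qed.

Lemma gnorm_gt0 x : (0 < gnorm x) = (x != 0).
Proof. by rewrite lt_def gnorm_ge0 gnorm_eq0 andbT. Qed.

Lemma gaussInt_gnorm x : gaussInt x -> exists n : nat, gnorm x = n%:R.
Proof.
move=> [a [b ->]]; exists (absz (a ^+ 2 + b ^+ 2)).
by rewrite natr_absz ger0_norm ?addr_ge0 ?sqr_ge0 // rmorphD !rmorphXn.
Qed.

Lemma gnorm1_gunit x : gaussInt x -> gnorm x = 1 -> gunit x.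
Proof.
move=> [a [b ->]] norm1; split; first by exists a, b.
exists (a%:~R -i* b%:~R)%C; split; first by exists a, (- b); rewrite rmorphN.
apply/eqP; rewrite eq_complex /=; apply/andP; split; apply/eqP.
  by rewrite -[RHS]norm1 /gnorm /=; ring.
ring.
Qed.

Lemma gprime_gnorm p : gprime p -> exists n, gnorm p = n.+2%:R.
Proof.
case=> gp p_neq0 p_nunit _; have [[|[|n]] pn] := gaussInt_gnorm gp.
- by case: p_neq0; apply/eqP; rewrite -gnorm_eq0 pn.
- by case: p_nunit; apply: gnorm1_gunit.
- by exists n.
Qed.

Lemma gprime_gnorm_gt1 p : gprime p -> 1 < gnorm p.
Proof. by move=> /gprime_gnorm[n ->]; rewrite ltr1n. Qed.

Lemma gprime_ndvd1 p : gprime p -> ~ gdvd p 1.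
Proof. by case=> gp _ p_nunit _ [c [gc pc1]]; apply: p_nunit; split=> //; exists c. Qed.

Lemma exists_int_near (x : R) : exists z : int, `|x - z%:~R| <= 2^-1.
Proof.
exists (Num.floor (x + 2^-1)).
have := floor_itv (x + 2^-1); rewrite rmorphD /= => /andP[lb ub].
by rewrite ler_norml; apply/andP; split; lra.
Qed.

(* Round a / b to a nearest Gaussian integer. *)
Lemma gaussInt_div a b : b != 0 ->
  exists2 q, gaussInt q & gnorm (a - b * q) < gnorm b.
Proof.
move=> b_neq0; pose w := a / b.
have [u wu] := exists_int_near (Re w); have [v wv] := exists_int_near (Im w).
exists (u%:~R +i* v%:~R)%C; first by exists u, v.
have -> : a - b * (u%:~R +i* v%:~R)%C = b * (w - (u%:~R +i* v%:~R)%C).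
  by rewrite mulrBr mulrCA divff // mulr1.
rewrite gnormM -[X in _ < X]mulr1 ltr_pM2l ?gnorm_gt0 //.
rewrite /gnorm !raddfB /=; move: wu wv.
move: (Re w - u%:~R) (Im w - v%:~R) => s t; rewrite !ler_norml.
move=> /andP[s_lb s_ub] /andP[t_lb t_ub].
have : 0 <= (2^-1 - s) * (2^-1 + s) by rewrite mulr_ge0 //; lra.
have : 0 <= (2^-1 - t) * (2^-1 + t) by rewrite mulr_ge0 //; lra.
nra.
Qed.

Definition gideal p a g := exists x y, [/\ gaussInt x, gaussInt y & g = p * x + a * y].

Lemma gideal_l p a : gideal p a p.
Proof. by exists 1, 0; split; [exact: gaussInt1 | exact: gaussInt0 | ring]. Qed.

Lemma gideal_r p a : gideal p a a.
Proof. by exists 0, 1; split; [exact: gaussInt0 | exact: gaussInt1 | ring]. Qed.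

Lemma gideal_gaussInt p a g : gaussInt p -> gaussInt a -> gideal p a g -> gaussInt g.
Proof. by move=> gp ga [x [y [gx gy ->]]]; apply: gaussIntD; apply: gaussIntM. Qed.

Lemma gideal_subM p a g b q :
  gideal p a g -> gideal p a b -> gaussInt q -> gideal p a (b - g * q).
Proof.
move=> [x [y [gx gy ->]]] [x' [y' [gx' gy' ->]]] gq.
exists (x' - x * q), (y' - y * q).
by split; [apply: gaussIntB => //; apply: gaussIntM | apply: gaussIntB => //; apply: gaussIntM | ring].
Qed.

(* Euclid's algorithm: an element of minimal norm in (p, a) divides p and a. *)
Lemma gideal_common_divisor p a : gaussInt p -> gaussInt a -> p != 0 ->
  exists2 g, gideal p a g & gdvd g p /\ gdvd g a.
Proof.
move=> gp ga p_neq0; have [n pn] := gaussInt_gnorm gp.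
suff: forall g, gideal p a g -> g != 0 -> gnorm g = n%:R ->
    exists2 g', gideal p a g' & gdvd g' p /\ gdvd g' a.
  by apply; [exact: gideal_l | exact: p_neq0 | exact: pn].
elim/ltn_ind: n {pn} => n IH g g_in g_neq0 gn.
have reduce b q : gideal p a b -> gaussInt q -> gnorm (b - g * q) < gnorm g ->
    b - g * q != 0 -> exists2 g', gideal p a g' & gdvd g' p /\ gdvd g' a.
  move=> b_in gq r_lt r_neq0; have r_in := gideal_subM g_in b_in gq.
  have [m rm] := gaussInt_gnorm (gideal_gaussInt gp ga r_in).
  by apply: (IH m _ _ r_in r_neq0 rm); rewrite -(ltr_nat R) -rm -gn.
have [q1 gq1 r1_lt] := gaussInt_div p g_neq0.
have [q2 gq2 r2_lt] := gaussInt_div a g_neq0.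
have [/subr0_eq pE|] := eqVneq (p - g * q1) 0; last exact: reduce (gideal_l p a) gq1 r1_lt.
have [/subr0_eq aE|] := eqVneq (a - g * q2) 0; last exact: reduce (gideal_r p a) gq2 r2_lt.
by exists g => //; split; [exists q1 | exists q2].
Qed.

Lemma gprime_bezout p a : gprime p -> gaussInt a -> ~ gdvd p a ->
  exists x y, [/\ gaussInt x, gaussInt y & p * x + a * y = 1].
Proof.
move=> pp ga p_ndvd_a; have [gp /eqP p_neq0 _ p_irr] := pp.
have [g [x [y [gx gy gE]]] [[c [gc pE]] [e [ge aE]]]] :=
  gideal_common_divisor gp ga p_neq0.
have gg : gaussInt g by rewrite gE; apply: gaussIntD; apply: gaussIntM.
case: (p_irr g c gg gc pE) => [[_ [h [gh gh1]]] | [_ [v [gv cv1]]]].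
  by exists (x * h), (y * h); split; [exact: gaussIntM | exact: gaussIntM | rewrite -gh1 gE; ring].
case: p_ndvd_a; exists (v * e); split; first exact: gaussIntM.
by rewrite aE pE mulrA -(mulrA g c v) cv1 mulr1.
Qed.

Lemma gprime_dvdM p a b : gprime p -> gaussInt a -> gaussInt b ->
  gdvd p (a * b) -> gdvd p a \/ gdvd p b.
Proof.
move=> pp ga gb [c [gc abE]]; case: (classic (gdvd p a)) => [|p_ndvd_a]; first by left.
right; have [x [y [gx gy bezout]]] := gprime_bezout pp ga p_ndvd_a.
exists (x * b + c * y); split; first by apply: gaussIntD; apply: gaussIntM.
by rewrite -[LHS]mul1r -bezout mulrDl -mulrA (mulrC a y) -mulrA abE; ring.
Qed.

Lemma gprime_ndvdM p a b : gprime p -> gaussInt a -> gaussInt b ->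
  ~ gdvd p a -> ~ gdvd p b -> ~ gdvd p (a * b).
Proof. by move=> pp ga gb p_ndvd_a p_ndvd_b /(gprime_dvdM pp ga gb)[]. Qed.

Lemma gaussInt_pfactor p c : gprime p -> gaussInt c -> c != 0 ->
  exists r c', [/\ gaussInt c', ~ gdvd p c' & c = p ^+ r * c'].
Proof.
move=> pp gc c_neq0; have [n cn] := gaussInt_gnorm gc.
elim/ltn_ind: n c gc c_neq0 cn => n IH c gc c_neq0 cn.
case: (classic (gdvd p c)) => [[c1 [gc1 cE]] | p_ndvd_c]; last first.
  by exists 0%N, c; rewrite expr0 mul1r.
have c1_neq0 : c1 != 0 by apply: contraNneq c_neq0 => c1_0; rewrite cE c1_0 mulr0.
have [m c1m] := gaussInt_gnorm gc1.
have [|r [c' [gc' p_ndvd_c' c1E]]] := IH m _ c1 gc1 c1_neq0 c1m.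
  rewrite -(ltr_nat R) -c1m -cn cE gnormM ltr_pMl ?gnorm_gt0 //.
  exact: gprime_gnorm_gt1.
by exists r.+1, c'; rewrite cE c1E exprS mulrA.
Qed.

End GaussianIntegers.

Section LocalDivisibility.
Variables (R : realType) (p : R[i]).
Hypothesis pp : gprime p.
Implicit Types c e x y : R[i].

(* [pdvd_loc m x]: p ^ m divides x in the localisation Z[i]_(p). *)
Definition pdvd_loc (m : nat) x :=
  exists c e, [/\ gaussInt c, gaussInt e, ~ gdvd p e & x = p ^+ m * (c / e)].

Let gp : gaussInt p. Proof. by case: pp. Qed.

Let p_neq0 : p != 0. Proof. by case: pp => _ /eqP. Qed.

Let ndvd_neq0 e : ~ gdvd p e -> e != 0.
Proof. by apply: contra_not_neq => ->; exists 0; split; [exact: gaussInt0 | rewrite mulr0]. Qed.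

Lemma pdvd_loc0 m : pdvd_loc m 0.
Proof.
exists 0, 1; split; [exact: gaussInt0 | exact: gaussInt1 | exact: gprime_ndvd1 |].
by rewrite mul0r mulr0.
Qed.

Lemma pdvd_loc1 : pdvd_loc 0 1.
Proof.
exists 1, 1; split; [exact: gaussInt1 | exact: gaussInt1 | exact: gprime_ndvd1 |].
by rewrite expr0 divr1 mulr1.
Qed.

Lemma pdvd_loc_mull c m x : gaussInt c -> pdvd_loc m x -> pdvd_loc m (c * x).
Proof.
move=> gc [c' [e [gc' ge p_ndvd_e ->]]]; exists (c * c'), e.
by split=> //; [exact: gaussIntM | ring].
Qed.

Lemma pdvd_locN m x : pdvd_loc m x -> pdvd_loc m (- x).
Proof.
move=> [c [e [gc ge p_ndvd_e ->]]]; exists (- c), e.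
by split=> //; [exact: gaussIntN | ring].
Qed.

Lemma pdvd_locW m n x : (m <= n)%N -> pdvd_loc n x -> pdvd_loc m x.
Proof.
move=> le_mn [c [e [gc ge p_ndvd_e ->]]]; exists (p ^+ (n - m) * c), e.
split=> //; first by apply: gaussIntM => //; apply: gaussIntX.
by rewrite -{1}(subnKC le_mn) exprD; ring.
Qed.

Lemma pdvd_locD m x y : pdvd_loc m x -> pdvd_loc m y -> pdvd_loc m (x + y).
Proof.
move=> [c [e [gc ge p_ndvd_e ->]]] [c' [e' [gc' ge' p_ndvd_e' ->]]].
exists (c * e' + c' * e), (e * e'); split.
- by apply: gaussIntD; apply: gaussIntM.
- exact: gaussIntM.
- exact: gprime_ndvdM.
- by field; rewrite !ndvd_neq0.
Qed.

Lemma pdvd_locM m n x y :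
  pdvd_loc m x -> pdvd_loc n y -> pdvd_loc (m + n) (x * y).
Proof.
move=> [c [e [gc ge p_ndvd_e ->]]] [c' [e' [gc' ge' p_ndvd_e' ->]]].
exists (c * c'), (e * e'); split.
- exact: gaussIntM.
- exact: gaussIntM.
- exact: gprime_ndvdM.
- by rewrite exprD; field; rewrite !ndvd_neq0.
Qed.

Lemma pdvd_locX m x j : pdvd_loc m x -> pdvd_loc (m * j) (x ^+ j).
Proof.
move=> x_m; elim: j => [|j IH]; first by rewrite muln0 expr0; apply: pdvd_loc1.
by rewrite mulnS exprS; apply: pdvd_locM.
Qed.

Lemma pdvd_loc_sum m (I : Type) (r : seq I) (P : pred I) (F : I -> R[i]) :
  (forall i, P i -> pdvd_loc m (F i)) -> pdvd_loc m (\sum_(i <- r | P i) F i).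
Proof. by move=> F_m; apply: big_ind => //; [apply: pdvd_loc0 | apply: pdvd_locD]. Qed.

(* [pval] is defined by choice; Euclid's lemma rules out every witness
   [x = p ^ n * (a / b)] with [n < m] and [p] dividing neither [a] nor [b]. *)
Lemma pdvd_loc_pval m x : x != 0 -> pdvd_loc m x -> m%:Z <= pval p x.
Proof.
move=> x_neq0 [c [e [gc ge p_ndvd_e xE]]].
have c_neq0 : c != 0 by apply: contraNneq x_neq0 => c0; rewrite xE c0 mul0r mulr0.
have [r [c' [gc' p_ndvd_c' cE]]] := gaussInt_pfactor pp gc c_neq0.
have : is_pval p x (pval p x).
  apply: (epsilon_spec (inhabits 0) (is_pval p x)).
  exists (Posz (m + r)), c', e; do !split => //; first exact/eqP/ndvd_neq0.
  by rewrite xE cE -exprnP exprD; ring.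
move: (pval p x) => n [a [b [ga [gb [/eqP b_neq0 [p_ndvd_a [p_ndvd_b xE']]]]]]].
rewrite leNgt; apply/negP => lt_nm.
have [k mE] : exists k : nat, m%:Z = n + k.+1%:Z by exists (`|m%:Z - n| - 1)%N; lia.
have abE : a / b = p ^+ k.+1 * (c / e).
  apply: (mulfI (expfz_neq0 n p_neq0)).
  by rewrite -xE' xE exprnP mE (expfzDr _ _ p_neq0) -exprnP -mulrA.
have : gdvd p (a * e).
  exists (p ^+ k * c * b); split; first by apply: gaussIntM => //; apply: gaussIntM => //; apply: gaussIntX.
  have -> : a = a / b * b by rewrite divfK.
  by rewrite abE exprS; field; apply: ndvd_neq0.
by case/(gprime_dvdM pp ga ge).
Qed.

Lemma absp_pdvd_loc m x : pdvd_loc m x -> absp p x <= (gnorm p ^+ m)^-1.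
Proof.
move=> x_m; have g_gt1 := gprime_gnorm_gt1 pp.
have g_gt0 : 0 < gnorm p := lt_trans ltr01 g_gt1.
rewrite /absp; have [_|x_neq0] := eqVneq x 0; first by rewrite invr_ge0 exprn_ge0 // ltW.
have [t ->] : exists t : nat, pval p x = (m + t)%N.
  by exists `|pval p x - m|%N; have := pdvd_loc_pval x_neq0 x_m; lia.
rewrite -exprnN exprD invfM; apply: ler_piMr; first by rewrite invr_ge0 exprn_ge0 // ltW.
by rewrite invf_le1 ?exprn_gt0 // exprn_ege1 // ltW.
Qed.

Lemma gnorm_expn_lt (eps : R) : 0 < eps -> exists m, (gnorm p ^+ m)^-1 < eps.
Proof.
move=> eps_gt0; have [n ->] := gprime_gnorm pp.
exists (Num.Def.archi_bound eps^-1).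
rewrite -natrX invf_plt ?posrE ?ltr0n ?expn_gt0 //.
have eps_inv_ge0 : 0 <= eps^-1 by rewrite invr_ge0 ltW.
apply: lt_trans (archi_boundP eps_inv_ge0) _.
by rewrite ltr_nat ltn_expl.
Qed.

(* [pdvd_locD] plays the role of the ultrametric inequality. *)
Lemma cvgKp_series (t : nat -> R[i]) :
  (forall m, exists N, forall i, (N <= i)%N -> pdvd_loc m (t i)) ->
  cvgKp p (fun n => \sum_(i < n) t i).
Proof.
move=> t_small eps eps_gt0; have [m m_lt] := gnorm_expn_lt eps_gt0.
have [N tN] := t_small m.
have sumE n : (N <= n)%N -> \sum_(i < n) t i = \sum_(i < N) t i + \sum_(N <= i < n) t i.
  by move=> le_Nn; rewrite -[LHS](big_mkord xpredT t) (big_cat_nat (leq0n N) le_Nn) big_mkord.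
have tail n : pdvd_loc m (\sum_(N <= i < n) t i).
  rewrite big_seq_cond; apply: pdvd_loc_sum => i /andP[+ _].
  by rewrite mem_index_iota => /andP[/tN].
exists N => n1 n2 le1 le2; rewrite (sumE _ le1) (sumE _ le2) opprD addrACA subrr add0r.
by apply: le_lt_trans (absp_pdvd_loc (pdvd_locD (tail n1) (pdvd_locN (tail n2)))) m_lt.
Qed.

Lemma pdvd_loc_inv_frac num den : gaussInt num -> ~ gdvd p num -> gdvd p den ->
  pdvd_loc 1 (num / den)^-1.
Proof.
move=> gnum p_ndvd_num [den' [gden' ->]]; exists den', num.
by split=> //; rewrite invf_div expr1 mulrA.
Qed.

Lemma cvgKp_alpha_psum alpha k (d : int -> nat) :
  pdvd_loc 1 alpha^-1 -> cvgKp p (alpha_psum alpha k d).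
Proof.
move=> alpha_inv.
apply: (@cvgKp_series (fun i => (d (k - i%:Z))%:R * alpha ^ (k - i%:Z))) => m.
exists (`|k| + m)%N => i le_i.
pose j := `|i%:Z - k|%N.
have kiE : k - i%:Z = - j%:Z by rewrite /j; lia.
have le_mj : (m <= j)%N by rewrite /j; lia.
rewrite kiE -exprnN -exprVn; apply: pdvd_loc_mull; first exact: gaussInt_nat.
by apply: pdvd_locW le_mj _; have := pdvd_locX j alpha_inv; rewrite mul1n.
Qed.

End LocalDivisibility.

Theorem mainTheorem12 (R : realType) (alpha : R[i]) (a0 a1 a2 : int)
  (num den : R[i]) :
  gaussRat alpha -> complex.Im alpha != 0 -> 1 < `|alpha| ->
  gcdz (gcdz a0 a1) a2 = 1 -> 0 < a2 ->
  a2%:~R * alpha ^+ 2 + a1%:~R * alpha + a0%:~R = 0 ->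
  gaussInt num -> gaussInt den -> den <> 0 -> alpha = num / den ->
  (forall q : R[i], gprime q -> gdvd q num -> gdvd q den -> False) ->
  forall (k : int) (d : int -> nat),
    (forall j : int, j <= k -> (d j < `|a0|)%N) ->
    cvgC (alpha_psum alpha k d) /\
    (forall p : R[i], gprime p -> gdvd p den -> cvgKp p (alpha_psum alpha k d)).
Proof.
(* Only |alpha| > 1, the digit bound and the reduced fraction num / den matter;
   the minimal polynomial enters solely through the digit bound |a0|. *)
move=> _ _ alpha_gt1 _ _ _ gnum _ _ alphaE num_den_coprime k d d_lt; split.
  exact: cvgC_alpha_psum alpha_gt1 d_lt.
move=> p pp p_dvd_den; apply: (cvgKp_alpha_psum pp); rewrite alphaE.
apply: pdvd_loc_inv_frac => // p_dvd_num.
exact: num_den_coprime p pp p_dvd_num p_dvd_den.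
Qed.
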